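(* If $X\subseteq V$ is such that $D[X]$ is a directed sub-block, then there exists a subsystem state $\psi^A_X$ with $A:X\to\{S,I\}$ belonging to $M_E$.
   Context: $D=(V,A)$ is a directed graph on $V=\{1,\dots,N\}$ with rates $T_{ij}\ge0$, $T_{ij}>0$ iff $(j,i)\in A$, $T_{ii}=0$. A subsystem state is $\psi^A_W$ with $W\subseteq V$ nonempty, $A:W\to\{S,I,R\}$; $S_i,I_i$ are single-node states; for $n\notin W$, $\psi^A_WI_n$ is the state on $W\cup\{n\}$ extending $A$ with $n$ in state $I$; $h^X_k(\psi^A_W)$ changes the state of $k\in W$ to $X$. $\mathrm{IN}(X)$ is the set of nodes from which some member of $X$ is reachable by a directed path; $f_E(X,Y,Z)=1$ iff $\mathrm{IN}(X)\cap\mathrm{IN}(Y)=\emptyset$ in $D-Z$ (else $0$), with the convention $f_E(\{n\},\emptyset,\{k\})=0$. A state $\psi^A_W$, $A:W\to\{S,I\}$, induces: $\psi^A_W$; $h^S_k(\psi^A_W)$ for $k\in W$ with $A_k=I$ and $T_{kn}>0$ for some $n\in W$ with $A_n=I$; and for each $k\in W$, $n\in V\setminus W$ with $T_{kn}>0$: the state $h^S_k(\psi^A_W)I_n$ if $f_E(\{n\},W\setminus\{k\},\{k\})=0$, or the states $h^S_k(\psi^A_W)$, $S_kI_n$, $S_k$ if it equals $1$. $M_E$ is the smallest set of subsystem states containing all $S_i,I_i$ and closed under induced states. $D[X]$ is the subgraph induced on $X$. A graph is biconnected if it has at least three vertices, is connected, and remains connected after deleting any single vertex. $D[X]$ is a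 directed sub-block if some node of $X$ is reachable by a directed path within $D[X]$ from every other node of $X$ and the underlying undirected graph of $D[X]$ is biconnected. *)

From HB Require Import structures.
From mathcomp Require Import all_boot all_order all_algebra.
Set Implicit Arguments. Unset Strict Implicit. Unset Printing Implicit Defensive.
Import Order.TTheory GRing.Theory Num.Theory.
Local Open Scope ring_scope.

Inductive st := Sst | Ist | Rst.

Section Epidemic.
Variables (R : realFieldType) (N : nat) (T : 'I_N -> 'I_N -> R).
(* Vertices are 'I_N (i.e. {0,...,N-1}, a relabelling of {1,...,N}).
   T i j > 0  iff  (j,i) is an arc, i.e. the arc relation is  j -> i. *)

Definition arc (u v : 'I_N) : bool := 0 < T v u.

(* A (partial) state: psi i = None iff i is not in the support W. *)
Definition sstate := {ffun 'I_N -> option st}.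

Definition dom (psi : sstate) : {set 'I_N} := [set i | psi i].

Definition is_subsystem_state (psi : sstate) : Prop := exists i, psi i.

Definition SIvalued (psi : sstate) : Prop := forall i, psi i <> Some Rst.

Definition single (i : 'I_N) (x : st) : sstate :=
  [ffun j => if j == i then Some x else None].

Definition SkIn (k n : 'I_N) : sstate :=
  [ffun j => if j == k then Some Sst else if j == n then Some Ist else None].

Definition h (x : st) (k : 'I_N) (psi : sstate) : sstate :=
  [ffun j => if j == k then Some x else psi j].

Definition addI (psi : sstate) (n : 'I_N) : sstate :=
  [ffun j => if j == n then Some Ist else psi j].

Definition arc_minus (Z : {set 'I_N}) : rel 'I_N :=
  fun u v => [&& u \notin Z, v \notin Z & arc u v].

Definition IN (X Z : {set 'I_N}) : {set 'I_N} :=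
  [set u | (u \notin Z) && [exists x in X, (x \notin Z) && connect (arc_minus Z) u x]].

(* f_E(X,Y,Z), with the convention f_E({n}, emptyset, {k}) = 0 *)
Definition fE (X Y Z : {set 'I_N}) : bool :=
  if [&& Y == set0, #|X| == 1%N & #|Z| == 1%N] then false
  else [disjoint IN X Z & IN Y Z].

(* phi is a state induced by psi (psi assumed to have values in {S,I}) *)
Definition induces (psi phi : sstate) : Prop :=
  phi = psi
  \/ (exists k n, psi k = Some Ist /\ psi n = Some Ist /\ 0 < T k n /\ phi = h Sst k psi)
  \/ (exists k n, psi k /\ psi n = None /\ 0 < T k n /\
       ((fE [set n] (dom psi :\ k) [set k] = false /\ phi = addI (h Sst k psi) n)
        \/ (fE [set n] (dom psi :\ k) [set k] = true /\
            (phi = h Sst k psi \/ phi = SkIn k n \/ phi = single k Sst)))).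

Inductive inME : sstate -> Prop :=
| ME_S i : inME (single i Sst)
| ME_I i : inME (single i Ist)
| ME_step psi phi : inME psi -> SIvalued psi -> is_subsystem_state psi ->
    induces psi phi -> inME phi.

Definition uarc_in (Y : {set 'I_N}) : rel 'I_N :=
  fun a b => [&& a \in Y, b \in Y & arc a b || arc b a].

Definition uconnected_on (Y : {set 'I_N}) : Prop :=
  forall u v, u \in Y -> v \in Y -> connect (uarc_in Y) u v.

Definition biconnected_on (Y : {set 'I_N}) : Prop :=
  (3 <= #|Y|)%N /\ uconnected_on Y /\ forall v, v \in Y -> uconnected_on (Y :\ v).

Definition darc_in (Y : {set 'I_N}) : rel 'I_N :=
  fun a b => [&& a \in Y, b \in Y & arc a b].

Definition directed_subblock (X : {set 'I_N}) : Prop :=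
  (exists2 r, r \in X & forall u, u \in X -> connect (darc_in X) u r)
  /\ biconnected_on X.

End Epidemic.

(* Starting from the single infected root r, the infected region W can always
   be enlarged inside X: some arc n -> k enters W from X :\: W, and replacing
   k by S while adding n as I is an induced state as soon as f_E({n}, W - k,
   {k}) = 0, i.e. some node reaches both n and W - k in D - k.  If n itself
   reaches W - k we are done.  Otherwise biconnectivity yields an undirected
   path from n to W - k in X - k; at its first edge b -- a into the nodes
   reaching W - k, the arc goes b -> a.  Following the directed path from a to
   the root r, the last node c still reachable from a in D - k has its next
   arc c -> k, and b, reaching both c and W - k, shows f_E({c}, W - k, {k}) = 0. *)
From Pilot Require Import Defs.
From HB Require Import structures.
From mathcomp Require Import all_boot all_order all_algebra.
Import Order.TTheory GRing.Theory Num.Theory.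
Local Open Scope ring_scope.

Lemma connect_crossing (U : finType) (e : rel U) (P : pred U) x y :
  connect e x y -> ~~ P x -> P y ->
  exists a b, [/\ connect e x a, ~~ P a, e a b & P b].
Proof.
move/connectP=> [p]; elim: p x => [|z p IH] x /=.
  by move=> _ -> Px Py; rewrite Py in Px.
move=> /andP[exz pz] ey Px Py.
have [Pz | nPz] := boolP (P z); first by exists x, z; rewrite connect0.
have [a [b [za nPa eab Pb]]] := IH z pz ey nPz Py.
by exists a, b; split=> //; apply: connect_trans (connect1 exz) za.
Qed.

Lemma connect_preserves (U : finType) (e : rel U) (Q : pred U) x y :
  (forall a b, e a b -> Q b) -> connect e x y -> Q x -> Q y.
Proof.
move=> eQ /connectP[p]; elim: p x => [|z p IH] x /=; first by move=> _ ->.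
by move=> /andP[exz pz] ey _; apply: IH pz ey (eQ _ _ exz).
Qed.

Section Epidemic.
Variables (R : realFieldType) (N : nat) (T : 'I_N -> 'I_N -> R).

Lemma connect_arc_minus_notin {Z : {set 'I_N}} {x y} :
  connect (arc_minus T Z) x y -> x \notin Z -> y \notin Z.
Proof.
by apply: (@connect_preserves _ _ (fun v => v \notin Z)) => a b /and3P[].
Qed.

Lemma mem_IN {Y Z : {set 'I_N}} {u y} :
  connect (arc_minus T Z) u y -> u \notin Z -> y \in Y -> y \notin Z ->
  u \in IN T Y Z.
Proof.
by move=> uy uZ yY yZ; rewrite inE uZ; apply/existsP; exists y; rewrite yY yZ.
Qed.

Lemma IN_connect {Y Z : {set 'I_N}} {u v} :
  u \notin Z -> connect (arc_minus T Z) u v -> v \in IN T Y Z -> u \in IN T Y Z.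
Proof.
move=> uZ uv; rewrite !inE uZ => /andP[_ /existsP[y /and3P[yY yZ vy]]].
by apply/existsP; exists y; rewrite yY yZ (connect_trans uv vy).
Qed.

Lemma fE_IN_meet {X Y Z : {set 'I_N}} {u} :
  u \in IN T X Z -> u \in IN T Y Z -> fE T X Y Z = false.
Proof.
move=> uX uY; rewrite /fE; case: ifP => // _.
by apply/negP => /disjointFr/(_ uX); rewrite uY.
Qed.

Lemma fE_set0 (n k : 'I_N) : fE T [set n] set0 [set k] = false.
Proof. by rewrite /fE eqxx !cards1. Qed.

Lemma dom_single (i : 'I_N) x : dom (single i x) = [set i].
Proof. by apply/setP => j; rewrite !inE ffunE; case: (j == i). Qed.

Lemma dom_addI_h (psi : sstate N) x k n :
  k \in dom psi -> dom (addI (h x k psi) n) = n |: dom psi.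
Proof.
move=> kd; apply/setP => j; rewrite !inE !ffunE.
by case: (j =P n) => //= _; case: (j =P k) => // ->; move: kd; rewrite inE.
Qed.

Section SubBlock.
Variables (X : {set 'I_N}) (r : 'I_N).
Hypothesis reach_r : forall u, u \in X -> connect (darc_in T X) u r.
Hypothesis uconnected_minus : forall v, v \in X -> uconnected_on T (X :\ v).

Lemma entering_arc {W : {set 'I_N}} :
  r \in W -> W \subset X -> W != X ->
  exists n k, [/\ n \in X, n \notin W, k \in W & Defs.arc T n k].
Proof.
move=> rW WX WnX.
have [z zX zW] : exists2 z, z \in X & z \notin W.
  by apply/subsetPn; apply: contra WnX => XW; rewrite eqEsubset WX.
have [n [k [_ nW /and3P[nX _ ank] kW]]] :=
  @connect_crossing _ _ (mem W) _ _ (reach_r _ zX) zW rW.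
by exists n, k.
Qed.

Lemma arc_to_cut_vertex {W : {set 'I_N}} {k a} :
  r \in W -> a \in X -> a != k -> a \notin IN T (W :\ k) [set k] ->
  exists c, [/\ c \in X, c \notin W, c != k, Defs.arc T c k &
                connect (arc_minus T [set k]) a c].
Proof.
move=> rW aX ak aIN; set P := fun v => ~~ connect (arc_minus T [set k]) a v.
have akZ : a \notin [set k] by rewrite in_set1.
have Pr : P r.
  apply/negP => ar; have rZ := connect_arc_minus_notin ar akZ.
  by case/negP: aIN; apply: (mem_IN ar); rewrite // in_setD1 -in_set1 rZ.
have nPa : ~~ P a by rewrite /P negbK connect0.
have [c [d [_ /negPn ac /and3P[cX dX cd] Pd]]] :=
  @connect_crossing _ _ P _ _ (reach_r _ aX) nPa Pr.
have cZ := connect_arc_minus_notin ac akZ.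
have dk : d = k.
  apply/eqP; rewrite -in_set1; apply: contraNT Pd => dZ.
  by rewrite (connect_trans ac) // connect1 // /arc_minus cZ dZ.
have cW : c \notin W.
  apply: contra aIN => cW; apply: (mem_IN ac) => //.
  by rewrite in_setD1 -in_set1 cZ.
by exists c; split=> //; [rewrite -in_set1 | rewrite -dk].
Qed.

Lemma extension_arc {W : {set 'I_N}} :
  r \in W -> W \subset X -> W != X ->
  exists n k, [/\ n \in X, n \notin W, k \in W, Defs.arc T n k &
                  fE T [set n] (W :\ k) [set k] = false].
Proof.
move=> rW WX WnX.
have [n [k [nX nW kW ank]]] := entering_arc rW WX WnX.
have [W0 | /set0Pn[w wWk]] := eqVneq (W :\ k) set0.
  by exists n, k; rewrite W0 fE_set0.
have nk : n != k by apply: contraNneq nW => ->.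
have kZ : forall v, (v \notin [set k]) = (v != k) by move=> v; rewrite in_set1.
have kX : k \in X := subsetP WX k kW.
set good := fun v => v \in IN T (W :\ k) [set k].
have [gn | ngn] := boolP (good n).
  exists n, k; split=> //; apply: (fE_IN_meet _ gn).
  by apply: (mem_IN (connect0 _ _)); rewrite ?in_set1 ?eqxx ?kZ.
have [wX wk] : w \in X /\ w != k.
  by move: wWk; rewrite in_setD1 => /andP[-> /(subsetP WX)->].
have gw : good w by apply: (mem_IN (connect0 _ _)); rewrite ?kZ.
have nXk : n \in X :\ k by rewrite in_setD1 nk.
have wXk : w \in X :\ k by rewrite in_setD1 wk.
have [a [b [_ nga /and3P[aXk bXk abba] gb]]] :=
  @connect_crossing _ _ good _ _ (uconnected_minus _ kX _ _ nXk wXk) ngn gw.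
move: aXk bXk; rewrite !in_setD1 => /andP[ak aX] /andP[bk bX].
have ba : Defs.arc T b a.
  case/orP: abba => // ab; case/negP: nga; apply: (IN_connect _ _ gb); rewrite ?kZ //.
  by apply: connect1; rewrite /arc_minus !kZ ak bk.
have [c [cX cW ck ack ac]] := arc_to_cut_vertex rW aX ak nga.
have bc : connect (arc_minus T [set k]) b c.
  by apply: connect_trans (connect1 _) ac; rewrite /arc_minus !kZ bk ak.
exists c, k; split=> //; apply: (fE_IN_meet _ gb).
by apply: (mem_IN bc); rewrite ?in_set1 ?eqxx ?kZ.
Qed.

Lemma inME_fill (psi : sstate N) :
  inME T psi -> SIvalued psi -> r \in dom psi -> dom psi \subset X ->
  exists phi : sstate N, [/\ inME T phi, dom phi = X & SIvalued phi].
Proof.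
move: {2}#|X :\: dom psi| (leqnn #|X :\: dom psi|) => m.
elim: m psi => [|m IH] psi Hm Hin HSI rd dX.
  exists psi; split=> //; apply/eqP; rewrite eqEsubset dX /=.
  by rewrite -setD_eq0 -cards_eq0 -leqn0.
have [dE | dnX] := eqVneq (dom psi) X; first by exists psi.
have [n [k [nX nW kW Tkn hfE]]] := extension_arc rd dX dnX.
have dphi := dom_addI_h psi Sst k n kW.
apply: (IH (addI (h Sst k psi) n)).
- rewrite dphi setUC -setDDl -ltnS -add1n.
  by rewrite (cardsD1 n) inE nX nW in Hm.
- apply: (ME_step Hin HSI); first by exists r; move: rd; rewrite inE.
  right; right; exists k, n; split; first by move: kW; rewrite inE.
  split; first by move: nW; rewrite inE; case: (psi n).
  by split=> //; left.
- by move=> j; rewrite !ffunE; case: (j == n) => //; case: (j == k).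
- by rewrite dphi setU1r.
- by rewrite dphi subUset sub1set nX dX.
Qed.

End SubBlock.
End Epidemic.

Theorem mainTheorem9 (R : realFieldType) (N : nat) (T : 'I_N -> 'I_N -> R)
  (T_nonneg : forall i j, 0 <= T i j) (T_diag : forall i, T i i = 0)
  (X : {set 'I_N}) :
  directed_subblock T X ->
  exists psi : sstate N,
    inME T psi /\ dom psi = X /\ SIvalued psi.
Proof.
(* Neither the sign nor the diagonal of T plays a role: only arcs matter. *)
move=> [[r rX reach_r] [_ [_ uconnected_minus]]].
have [||||psi [Hin dX HSI]] := @inME_fill R N T X r reach_r uconnected_minus
  (single r Ist); rewrite ?dom_single ?set11 ?sub1set //.
- exact: ME_I.
- by move=> j; rewrite ffunE; case: (j == r).
by exists psi.
Qed.
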